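(* Let $\epsilon>0$, $\rho\ge 1+\epsilon$, $S\ge 0$, and let $\beta_1, \dots, \beta_k$ be nonnegative reals such that $1+\epsilon \leq \beta_i \leq \rho$ for all $i$ and $\sum_{i=1}^k \beta_i \geq S$. Then \[ \prod_{i=1}^k \beta_i \geq \min\left\{ \rho^{S/{\rho}},\ (1+\epsilon)^{S/{(1+\epsilon)}} \right\}. \] *)

From Stdlib Require Import Reals.
Open Scope R_scope.

Fixpoint rsum (b : nat -> R) (k : nat) : R :=
  match k with O => 0 | S k' => rsum b k' + b k' end.
Fixpoint rprod (b : nat -> R) (k : nat) : R :=
  match k with O => 1 | S k' => rprod b k' * b k' end.

(* Since ln is concave, the line t |-> c t through the origin lies below ln on
   the whole interval [1 + eps, rho] as soon as it does at both endpoints; the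
   largest such slope is c = min (ln rho / rho, ln (1 + eps) / (1 + eps)).
   Summing over i gives ln (prod beta_i) >= c * sum beta_i >= c S, and
   exp (c S) is exactly the minimum in the statement. *)
From Stdlib Require Import Reals Lra Lia.
Open Scope R_scope.

Lemma exp_le_compat (x y : R) : x <= y -> exp x <= exp y.
Proof.
  intros [hlt | ->]; [left; apply exp_increasing, hlt | right; reflexivity].
Qed.

Lemma Rmin_nondecreasing (f : R -> R) (u v : R) :
  (forall x y, x <= y -> f x <= f y) -> f (Rmin u v) = Rmin (f u) (f v).
Proof.
  intros hf. unfold Rmin at 1. destruct (Rle_dec u v) as [huv | hvu].
  - rewrite Rmin_left; [reflexivity | apply hf, huv].
  - rewrite Rmin_right; [reflexivity | apply hf; lra].
Qed.

Lemma Rle_div_mul (c y x : R) : 0 < x -> c <= y / x -> c * x <= y.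
Proof.
  intros hx h. replace y with (y / x * x) by (field; lra).
  apply Rmult_le_compat_r; lra.
Qed.

Lemma Rpower_div_base (x S : R) : Rpower x (S / x) = exp (ln x / x * S).
Proof. unfold Rpower, Rdiv. f_equal. ring. Qed.

Lemma ln_le_tangent (x y : R) : 0 < x -> 0 < y -> ln y <= ln x + (y - x) / x.
Proof.
  intros hx hy.
  assert (hyx : ln (y / x) <= y / x - 1).
  { pose proof (exp_ineq1_le (ln (y / x))) as h.
    rewrite exp_ln in h by (apply Rdiv_lt_0_compat; lra). lra. }
  unfold Rdiv in hyx.
  rewrite ln_mult, ln_Rinv in hyx by (try apply Rinv_0_lt_compat; lra).
  replace ((y - x) / x) with (y * / x - 1) by (field; lra). lra.
Qed.

Lemma ln_ge_linear_between (a b c x : R) :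
  0 < a -> a <= x <= b -> c * a <= ln a -> c * b <= ln b -> c * x <= ln x.
Proof.
  intros ha hx hca hcb.
  assert (hta := ln_le_tangent x a ltac:(lra) ha).
  assert (htb := ln_le_tangent x b ltac:(lra) ltac:(lra)).
  (* The weights b - x and x - a cancel the tangent slopes. *)
  assert (hchord : (b - x) * ln a + (x - a) * ln b <= (b - a) * ln x).
  { assert (hslopes : (b - x) * ((a - x) / x) + (x - a) * ((b - x) / x) = 0)
      by (field; lra).
    assert ((b - x) * ln a <= (b - x) * (ln x + (a - x) / x))
      by (apply Rmult_le_compat_l; lra).
    assert ((x - a) * ln b <= (x - a) * (ln x + (b - x) / x))
      by (apply Rmult_le_compat_l; lra).
    nra. }
  destruct (Req_dec a b) as [<- | hab].
  - replace x with a by lra. exact hca.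
  - apply (Rmult_le_reg_l (b - a)); nra.
Qed.

Lemma rsum_le (f g : nat -> R) (k : nat) :
  (forall i, (i < k)%nat -> f i <= g i) -> rsum f k <= rsum g k.
Proof.
  induction k as [|k IH]; intros hfg; simpl; [lra|].
  assert (rsum f k <= rsum g k) by (apply IH; intros i hi; apply hfg; lia).
  assert (f k <= g k) by (apply hfg; lia). lra.
Qed.

Lemma rsum_scal (c : R) (b : nat -> R) (k : nat) :
  rsum (fun i => c * b i) k = c * rsum b k.
Proof. induction k as [|k IH]; simpl; [ring | rewrite IH; ring]. Qed.

Lemma rprod_pos (b : nat -> R) (k : nat) :
  (forall i, (i < k)%nat -> 0 < b i) -> 0 < rprod b k.
Proof.
  induction k as [|k IH]; intros hb; simpl; [lra|].
  apply Rmult_lt_0_compat; [apply IH; intros i hi|]; apply hb; lia.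
Qed.

Lemma ln_rprod (b : nat -> R) (k : nat) :
  (forall i, (i < k)%nat -> 0 < b i) ->
  ln (rprod b k) = rsum (fun i => ln (b i)) k.
Proof.
  induction k as [|k IH]; intros hb; simpl; [apply ln_1|].
  rewrite ln_mult, IH; [reflexivity | | apply rprod_pos | apply hb];
    try (intros i hi; apply hb); lia.
Qed.

Theorem lemmaA1 (eps rho S : R) (k : nat) (beta : nat -> R)
  (heps : 0 < eps) (hrho : 1 + eps <= rho) (hS : 0 <= S)
  (hnn : forall i, (i < k)%nat -> 0 <= beta i)
  (hb : forall i, (i < k)%nat -> 1 + eps <= beta i <= rho)
  (hsum : rsum beta k >= S) :
  rprod beta k >= Rmin (Rpower rho (S / rho)) (Rpower (1 + eps) (S / (1 + eps))).
Proof.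
  set (a := 1 + eps) in *.
  set (c := Rmin (ln rho / rho) (ln a / a)).
  assert (ha : 1 < a) by (unfold a; lra).
  assert (hpos : forall i, (i < k)%nat -> 0 < beta i)
    by (intros i hi; specialize (hb i hi); lra).
  assert (hc : 0 <= c).
  { apply Rmin_glb; left; apply Rdiv_lt_0_compat; try lra;
      rewrite <- ln_1; apply ln_increasing; lra. }
  assert (hline : forall i, (i < k)%nat -> c * beta i <= ln (beta i)).
  { intros i hi. apply (ln_ge_linear_between a rho); try lra; [apply hb, hi | |];
      apply Rle_div_mul; try lra; [apply Rmin_r | apply Rmin_l]. }
  assert (hln : c * S <= ln (rprod beta k)).
  { rewrite ln_rprod by exact hpos.
    apply Rle_trans with (c * rsum beta k); [apply Rmult_le_compat_l; lra|].
    rewrite <- rsum_scal. apply rsum_le, hline. }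
  assert (hmin : exp (c * S) = Rmin (exp (ln rho / rho * S)) (exp (ln a / a * S))).
  { apply (Rmin_nondecreasing (fun t => exp (t * S))).
    intros x y hxy. apply exp_le_compat, Rmult_le_compat_r; lra. }
  rewrite !Rpower_div_base, <- hmin, <- (exp_ln (rprod beta k)) by (apply rprod_pos, hpos).
  apply Rle_ge, exp_le_compat, hln.
Qed.
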